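(* Let $R$ be a commutative ring of Krull dimension $0$ which is integral over an Artinian subring $R_0$, and write $\mathcal{F}=\mathcal{F}(R_0,R)=\{R_\alpha\}$. Then for every $\alpha$, the ring $\mathcal{F}\llbracket X_1,\ldots,X_n\rrbracket$ is integral over its subring $R_\alpha\llbracket X_1,\ldots,X_n\rrbracket$.
   Context: All rings are commutative with identity, and subrings share the identity. For a $0$-dimensional ring $R$ and an Artinian subring $R_0\subseteq R$ such that $R$ is integral over $R_0$, let $\mathcal{F}(R_0,R)=\{R_\alpha\}$ denote the family of all subrings of $R$ that are finitely generated as $R_0$-algebras; this family is directed, each $R_\alpha$ is Artinian, and $R=\bigcup_\alpha R_\alpha$. The ring of Artinian power series $\mathcal{F}\llbracket X_1,\ldots,X_n\rrbracket$ is the set of all $f\in R\llbracket X_1,\ldots,X_n\rrbracket$ such that all coefficients of $f$ lie in a single $R_\alpha\in\mathcal{F}$; equivalently, $\mathcal{F}\llbracket X_1,\ldots,X_n\rrbracket=\bigcup_\alpha R_\alpha\llbracket X_1,\ldots,X_n\rrbracket$, which is a subring of $R\llbracket X_1,\ldots,X_n\rrbracket$. *)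

From HB Require Import structures.
From mathcomp Require Import all_boot all_order all_algebra.
Set Implicit Arguments. Unset Strict Implicit. Unset Printing Implicit Defensive.
Import Order.TTheory GRing.Theory Num.Theory.
Local Open Scope ring_scope.

Section RingNotions.
Variable R : comNzRingType.

Definition is_subring (S : R -> Prop) : Prop :=
  S 1 /\ (forall x y, S x -> S y -> S (x - y)) /\ (forall x y, S x -> S y -> S (x * y)).

Definition ideal_of (S : R -> Prop) (I : R -> Prop) : Prop :=
  (forall x, I x -> S x) /\ I 0 /\ (forall x y, I x -> I y -> I (x + y)) /\
  (forall r x, S r -> I x -> I (r * x)).

Definition artinian (S : R -> Prop) : Prop :=
  forall I : nat -> R -> Prop,
    (forall k, ideal_of S (I k)) ->
    (forall k x, I k.+1 x -> I k x) ->
    exists N, forall k, (N <= k)%N -> forall x, I k x <-> I N x.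

Definition prime_ideal (P : R -> Prop) : Prop :=
  ideal_of (fun _ => True) P /\ ~ P 1 /\ (forall x y, P (x * y) -> P x \/ P y).

Definition krull_dim0 : Prop :=
  (exists P, prime_ideal P) /\
  (forall P Q, prime_ideal P -> prime_ideal Q ->
     (forall x, P x -> Q x) -> forall x, Q x -> P x).

Definition integral_over (S A : R -> Prop) : Prop :=
  forall x, A x -> exists p : {poly R},
    p \is monic /\ (forall i, S p`_i) /\ root p x.

Definition gen_alg (R0 : R -> Prop) (s : seq R) (x : R) : Prop :=
  forall T, is_subring T -> (forall y, R0 y -> T y) ->
    (forall y, y \in s -> T y) -> T x.

(* Membership in the family F(R0,R): subrings of R that are finitely
   generated R0-algebras. *)
Definition in_family (R0 : R -> Prop) (A : R -> Prop) : Prop :=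
  exists s : seq R, forall x, A x <-> gen_alg R0 s x.

(* Formal power series in n variables X_1..X_n over R:
   functions from multi-indices ('I_n -> nat) to R. *)
Definition multi_index (n : nat) := {ffun 'I_n -> nat}.
Definition series (n : nat) := multi_index n -> R.

Definition sone (n : nat) : series n :=
  fun m => if m == [ffun _ => 0%N] then 1 else 0.

(* Cauchy product: (f g)_m = sum_{a <= m} f_a g_{m-a}; multi-indices a <= m
   are enumerated as functions 'I_n -> 'I_(max_i m_i + 1) bounded by m. *)
Definition smul (n : nat) (f g : series n) : series n :=
  fun m => \sum_(a : {ffun 'I_n -> 'I_(\max_(i < n) m i).+1}
                 | [forall i, (a i <= m i)%N])
             f [ffun i => nat_of_ord (a i)] * g [ffun i => (m i - a i)%N].

Definition sexp (n : nat) (f : series n) (k : nat) : series n :=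
  iter k (smul f) (@sone n).

Definition ps_over (n : nat) (A : R -> Prop) (f : series n) : Prop :=
  forall m, A (f m).

Definition artinian_ps (R0 : R -> Prop) (n : nat) (f : series n) : Prop :=
  exists A, in_family R0 A /\ ps_over A f.

Definition ps_integral_over (n : nat) (Q P : series n -> Prop) : Prop :=
  forall f, P f -> exists (d : nat) (c : nat -> series n),
    (forall i, (i < d)%N -> Q (c i)) /\
    (forall m, sexp f d m + \sum_(i < d) smul (c i) (sexp f i) m = 0).

End RingNotions.

From HB Require Import structures.
From mathcomp Require Import all_boot all_order all_algebra.
From mathcomp Require Import zify.
From mathcomp Require boolp.
Set Implicit Arguments. Unset Strict Implicit. Unset Printing Implicit Defensive.
Import GRing.Theory.
Local Open Scope ring_scope.

(* The coefficients of an Artinian series f lie in some R0-algebra generated by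
   finitely many elements, each integral over R0; such an algebra lies in the
   R0-span of a finite family b.  Hence f = \sum_i g_i * b_i with g_i in
   R0[[X]] and the constants b_i integral over R0, so f is integral over R0[[X]]
   because integral elements form a subring; and R0[[X]] is contained in every
   R_alpha[[X]]. *)

(* [lia] does not see applications of finite functions as atoms. *)
Ltac mi_lia := repeat match goal with |- context [@fun_of_fin _ _ _ ?f ?i] =>
  let a := fresh "a" in set a := @fun_of_fin _ _ _ f i end; lia.

Section MultiIndex.
Variable n : nat.
Notation mi := (multi_index n).

Definition mi_le (a m : mi) := [forall i, (a i <= m i)%N].
Definition mi_sub (m a : mi) : mi := [ffun i => (m i - a i)%N].
Definition mi_add (a b : mi) : mi := [ffun i => (a i + b i)%N].
Definition mi0 : mi := [ffun _ => 0%N].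

Definition mi_box K : seq mi :=
  map (fun a : {ffun 'I_n -> 'I_K} => [ffun i => nat_of_ord (a i)])
      (index_enum {ffun 'I_n -> 'I_K}).
Definition mi_below (m : mi) : seq mi :=
  [seq a <- mi_box (\max_(i < n) m i).+1 | mi_le a m].

Lemma mi_leP (a m : mi) : reflect (forall i, a i <= m i)%N (mi_le a m).
Proof. exact: forallP. Qed.

Lemma mi0_le (m : mi) : mi_le mi0 m.
Proof. by apply/mi_leP => i; rewrite ffunE. Qed.

Lemma mi_sub_le (m a : mi) : mi_le (mi_sub m a) m.
Proof. by apply/mi_leP => i; rewrite ffunE leq_subr. Qed.

Lemma mi_subK (m a : mi) : mi_le a m -> mi_sub m (mi_sub m a) = a.
Proof. by move/mi_leP=> le_am; apply/ffunP => i; rewrite !ffunE subKn. Qed.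

Lemma mi_sub0 (m : mi) : mi_sub m mi0 = m.
Proof. by apply/ffunP => i; rewrite !ffunE subn0. Qed.

Lemma uniq_mi_below m : uniq (mi_below m).
Proof.
rewrite filter_uniq // map_inj_uniq ?index_enum_uniq // => a b /ffunP eq_ab.
by apply/ffunP => i; apply/val_inj; have := eq_ab i; rewrite !ffunE.
Qed.

Lemma mem_mi_below (m a : mi) : (a \in mi_below m) = mi_le a m.
Proof.
rewrite mem_filter; case le_am: (mi_le a m) => //=.
have lt_a i : (a i < (\max_(j < n) m j).+1)%N.
  by rewrite ltnS (leq_trans (mi_leP _ _ le_am i)) // (leq_bigmax i).
apply/mapP; exists [ffun i => Ordinal (lt_a i)]; first by rewrite mem_index_enum.
by apply/ffunP => i; rewrite !ffunE.
Qed.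

Lemma perm_mi_below (m : mi) (s : seq mi) :
  uniq s -> (forall a, (a \in s) = mi_le a m) -> perm_eq s (mi_below m).
Proof.
by move=> us s_m; apply: uniq_perm => [||a]; rewrite ?uniq_mi_below // mem_mi_below.
Qed.

Lemma perm_mi_below_sub (m : mi) : perm_eq (map (mi_sub m) (mi_below m)) (mi_below m).
Proof.
apply: perm_mi_below => [|a].
  rewrite map_inj_in_uniq ?uniq_mi_below // => a b; rewrite !mem_mi_below.
  by move=> le_am le_bm eq_ab; rewrite -(mi_subK le_am) eq_ab mi_subK.
apply/mapP/idP => [[b _ ->]|le_am]; first exact: mi_sub_le.
by exists (mi_sub m a); rewrite ?mem_mi_below ?mi_sub_le ?mi_subK.
Qed.

Lemma perm_mi_below_add (m b : mi) : mi_le b m ->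
  perm_eq (map (mi_add b) (mi_below (mi_sub m b))) [seq a <- mi_below m | mi_le b a].
Proof.
move/mi_leP=> le_bm; apply: uniq_perm.
- rewrite map_inj_uniq ?uniq_mi_below // => a c /ffunP eq_ac; apply/ffunP => i.
  by have := eq_ac i; rewrite !ffunE; mi_lia.
- by rewrite filter_uniq ?uniq_mi_below.
move=> a; rewrite mem_filter mem_mi_below; apply/mapP/andP => [[c]|[/mi_leP le_ba /mi_leP le_am]].
  rewrite mem_mi_below => /mi_leP le_c ->.
  by split; apply/mi_leP => i; rewrite ffunE; have := le_c i; have := le_bm i; rewrite ffunE; mi_lia.
exists (mi_sub a b).
  by rewrite mem_mi_below; apply/mi_leP => i; rewrite !ffunE; have := le_am i; mi_lia.
by apply/ffunP => i; rewrite !ffunE; have := le_ba i; mi_lia.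
Qed.

Lemma exchange_mi_below (R : nmodType) (m : mi) (F : mi -> mi -> R) :
  \sum_(a <- mi_below m) \sum_(b <- mi_below a) F a b =
  \sum_(b <- mi_below m) \sum_(c <- mi_below (mi_sub m b)) F (mi_add b c) b.
Proof.
transitivity (\sum_(a <- mi_below m) \sum_(b <- mi_below m | mi_le b a) F a b).
  apply: eq_big_seq => a; rewrite mem_mi_below => /mi_leP le_am.
  rewrite -[RHS]big_filter; apply: perm_big; rewrite perm_sym.
  apply: perm_mi_below => [|b].
    by rewrite filter_uniq ?uniq_mi_below.
  rewrite mem_filter mem_mi_below; case: (mi_leP b a) => //= le_ba.
  by apply/mi_leP => i; apply: leq_trans (le_ba i) (le_am i).
rewrite (exchange_big_dep xpredT) //=; apply: eq_big_seq => b.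
rewrite mem_mi_below => le_bm.
by rewrite -big_filter -(perm_big _ (perm_mi_below_add le_bm)) big_map.
Qed.
End MultiIndex.

Definition powser (R : comNzRingType) (n : nat) := series R n.

Section SeriesProduct.
Variables (R : comNzRingType) (n : nat).
Implicit Types f g h : series R n.

Lemma smulE f g m :
  smul f g m = \sum_(a <- mi_below m) f a * g (mi_sub m a).
Proof.
rewrite /smul /mi_below /mi_box big_filter big_map; apply: eq_big => [a|a _].
  by apply: eq_forallb => i; rewrite ffunE.
by congr (_ * g _); apply/ffunP => i; rewrite !ffunE.
Qed.

Lemma smulC f g m : smul f g m = smul g f m.
Proof.
rewrite !smulE -(perm_big _ (perm_mi_below_sub m)) big_map.
by apply: eq_big_seq => a; rewrite mem_mi_below => le_am; rewrite mi_subK // mulrC.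
Qed.

Lemma smulA f g h m :
  smul (smul f g) h m = smul f (smul g h) m.
Proof.
rewrite !smulE.
under eq_bigr do rewrite smulE mulr_suml.
under [RHS]eq_bigr do rewrite smulE mulr_sumr.
rewrite exchange_mi_below; apply: eq_bigr => a _; apply: eq_bigr => b _.
by rewrite mulrA; congr (_ * g _ * h _); apply/ffunP => i; rewrite !ffunE; mi_lia.
Qed.

Lemma smulDl f1 f2 g m :
  smul (fun k => f1 k + f2 k) g m = smul f1 g m + smul f2 g m.
Proof. by rewrite !smulE -big_split; apply: eq_bigr => a _; rewrite mulrDl. Qed.

Definition sconst (c : R) : powser R n := fun m => if m == mi0 n then c else 0.

Lemma smul_sconstl c g m : smul (sconst c) g m = c * g m.
Proof.
rewrite smulE (bigD1_seq (mi0 n)) ?uniq_mi_below ?mem_mi_below ?mi0_le //=.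
rewrite /sconst eqxx mi_sub0 big1_seq ?addr0 // => a /andP[/negbTE -> _].
by rewrite mul0r.
Qed.

Lemma smul1 g m : smul (@sone R n) g m = g m.
Proof. by rewrite (_ : @sone R n = sconst 1) ?smul_sconstl ?mul1r. Qed.
End SeriesProduct.

Section PowerSeriesRing.
Variables (R : comNzRingType) (n : nat).
Notation PS := (powser R n).

HB.instance Definition _ := boolp.gen_eqMixin PS.
HB.instance Definition _ := boolp.gen_choiceMixin PS.

Definition ps_zero : PS := fun _ => 0.
Definition ps_opp (f : PS) : PS := fun m => - f m.
Definition ps_add (f g : PS) : PS := fun m => f m + g m.

Lemma ps_addA : associative ps_add.
Proof. by move=> f g h; apply: boolp.funext => m; apply: addrA. Qed.
Lemma ps_addC : commutative ps_add.
Proof. by move=> f g; apply: boolp.funext => m; apply: addrC. Qed.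
Lemma ps_add0 : left_id ps_zero ps_add.
Proof. by move=> f; apply: boolp.funext => m; apply: add0r. Qed.
Lemma ps_addN : left_inverse ps_zero ps_opp ps_add.
Proof. by move=> f; apply: boolp.funext => m; apply: addNr. Qed.

HB.instance Definition _ := GRing.isZmodule.Build PS ps_addA ps_addC ps_add0 ps_addN.

Definition ps_mul (f g : PS) : PS := smul f g.

Lemma ps_mulA : associative ps_mul.
Proof. by move=> f g h; apply: boolp.funext => m; rewrite /ps_mul smulA. Qed.
Lemma ps_mulC : commutative ps_mul.
Proof. by move=> f g; apply: boolp.funext => m; apply: smulC. Qed.
Lemma ps_mul1 : left_id (@sone R n : PS) ps_mul.
Proof. by move=> f; apply: boolp.funext => m; apply: smul1. Qed.
Lemma ps_mulDl : left_distributive ps_mul ps_add.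
Proof. by move=> f g h; apply: boolp.funext => m; apply: smulDl. Qed.
Lemma ps_one_neq0 : (@sone R n : PS) != 0.
Proof.
apply/eqP => /(congr1 (fun f : PS => f (mi0 n))).
by rewrite /sone eqxx; apply/eqP; rewrite oner_neq0.
Qed.

HB.instance Definition _ :=
  GRing.Zmodule_isComNzRing.Build PS ps_mulA ps_mulC ps_mul1 ps_mulDl ps_one_neq0.

Lemma ps_addE (f g : PS) m : (f + g) m = f m + g m. Proof. by []. Qed.
Lemma ps_subE (f g : PS) m : (f - g) m = f m - g m. Proof. by []. Qed.
Lemma ps_mulE (f g : PS) m : (f * g) m = smul f g m. Proof. by []. Qed.

Lemma ps_sumE I (r : seq I) (P : pred I) (F : I -> PS) m :
  (\sum_(i <- r | P i) F i) m = \sum_(i <- r | P i) F i m.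
Proof. exact: (big_morph (fun f : PS => f m)). Qed.

Lemma sexpE (f : PS) k : sexp f k = f ^+ k.
Proof. by elim: k => // k IH; rewrite exprS -IH. Qed.

Lemma sconst_is_zmod_morphism : zmod_morphism (@sconst R n).
Proof.
move=> a b; apply: boolp.funext => m.
by rewrite ps_subE /sconst; case: ifP => _; rewrite ?subr0.
Qed.

Lemma sconst_is_monoid_morphism : monoid_morphism (@sconst R n).
Proof.
split=> // a b; apply: boolp.funext => m /=.
by rewrite ps_mulE smul_sconstl /sconst; case: ifP; rewrite ?mulr0.
Qed.

HB.instance Definition _ :=
  GRing.isZmodMorphism.Build R PS (@sconst R n) sconst_is_zmod_morphism.
HB.instance Definition _ :=
  GRing.isMonoidMorphism.Build R PS (@sconst R n) sconst_is_monoid_morphism.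
End PowerSeriesRing.

Record subring_of (R : comNzRingType) :=
  SubringOf { subring_mem :> R -> Prop; subring_memP : is_subring subring_mem }.

Section SubringClosure.
Variables (R : comNzRingType) (S : subring_of R).

Lemma subring1 : S 1. Proof. by case: (subring_memP S). Qed.
Lemma subringB x y : S x -> S y -> S (x - y).
Proof. by case: (subring_memP S) => _ [+ _]; apply. Qed.
Lemma subringM x y : S x -> S y -> S (x * y).
Proof. by case: (subring_memP S) => _ [_]; apply. Qed.
Lemma subring0 : S 0. Proof. by rewrite -(subrr 1); apply: subringB; apply: subring1. Qed.
Lemma subringN x : S x -> S (- x). Proof. by rewrite -sub0r; apply/subringB/subring0. Qed.
Lemma subringD x y : S x -> S y -> S (x + y).
Proof. by move=> Sx Sy; rewrite -[y]opprK; apply: subringB => //; apply: subringN. Qed.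
Lemma subring_sum I (r : seq I) (P : pred I) F :
  (forall i, P i -> S (F i)) -> S (\sum_(i <- r | P i) F i).
Proof. by move=> SF; apply: big_ind => //; [apply: subring0 | apply: subringD]. Qed.
End SubringClosure.

Section Span.
Variables (R : comNzRingType) (S : subring_of R).

Definition in_span (b : seq R) (y : R) :=
  exists r : nat -> R, (forall i, S (r i)) /\ y = \sum_(i < size b) r i * b`_i.

Lemma in_span0 b : in_span b 0.
Proof.
exists (fun _ => 0); split=> [_|]; first exact: subring0.
by rewrite big1 // => i _; rewrite mul0r.
Qed.

Lemma in_spanD b y z : in_span b y -> in_span b z -> in_span b (y + z).
Proof.
move=> [r [Sr ->]] [q [Sq ->]]; exists (fun i => r i + q i); split=> [i|].
  exact: subringD.
by rewrite -big_split; apply: eq_bigr => i _; rewrite mulrDl.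
Qed.

Lemma in_spanZ b c y : S c -> in_span b y -> in_span b (c * y).
Proof.
move=> Sc [r [Sr ->]]; exists (fun i => c * r i); split=> [i|]; first exact: subringM.
by rewrite mulr_sumr; apply: eq_bigr => i _; rewrite mulrA.
Qed.

Lemma in_spanB b y z : in_span b y -> in_span b z -> in_span b (y - z).
Proof.
by move=> Sy Sz; rewrite -mulN1r; apply: in_spanD => //; apply: in_spanZ => //; apply/subringN/subring1.
Qed.

Lemma in_span_sum b I (r : seq I) (P : pred I) F :
  (forall i, P i -> in_span b (F i)) -> in_span b (\sum_(i <- r | P i) F i).
Proof. by move=> SF; apply: big_ind => //; [apply: in_span0 | apply: in_spanD]. Qed.

Lemma in_span_nth b i : (i < size b)%N -> in_span b b`_i.
Proof.
move=> lt_ib; exists (fun j => (j == i)%:R); split=> [j|].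
  by case: (j == i); [apply: subring1 | apply: subring0].
rewrite (bigD1 (Ordinal lt_ib)) //= eqxx mul1r big1 ?addr0 // => j ne_ji.
by have /negbTE -> : (j : nat) != i by []; rewrite mul0r.
Qed.

Lemma in_span_mem b u : u \in b -> in_span b u.
Proof. by move=> bu; rewrite -(nth_index 0 bu); apply: in_span_nth; rewrite index_mem. Qed.

Definition span_ring (b : seq R) :=
  in_span b 1 /\ forall u v, u \in b -> v \in b -> in_span b (u * v).

Lemma in_spanM b y z : span_ring b -> in_span b y -> in_span b z -> in_span b (y * z).
Proof.
move=> [_ bM] [r [Sr ->]] [q [Sq ->]]; rewrite mulr_suml.
apply: in_span_sum => i _; rewrite mulr_sumr; apply: in_span_sum => j _.
by rewrite mulrACA; apply: in_spanZ; [apply: subringM | apply: bM; apply: mem_nth].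
Qed.

Lemma gen_alg_in_span s b : span_ring b -> (forall y, y \in s -> in_span b y) ->
  forall y, gen_alg S s y -> in_span b y.
Proof.
move=> bR sb y; apply=> // [|z Sz].
  split; first by case: bR.
  by split=> ? ?; [apply: in_spanB | apply: in_spanM].
by rewrite -[z]mulr1; apply: in_spanZ => //; case: bR.
Qed.
End Span.

Section FiniteGeneration.
Variables (R : comNzRingType) (S : subring_of R).

Definition powers (x : R) (d : nat) := mkseq (fun l => x ^+ l) d.

Lemma in_span_powers x d l : (l < d)%N -> in_span S (powers x d) (x ^+ l).
Proof.
move=> lt_ld; rewrite -(nth_mkseq 0 (fun l => x ^+ l) lt_ld).
by apply: in_span_nth; rewrite size_mkseq.
Qed.

Lemma expr_in_span_powers x (p : {poly R}) k :
  p \is monic -> (forall i, S p`_i) -> root p x ->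
  in_span S (powers x (size p).-1) (x ^+ k).
Proof.
move=> mon_p Sp px0; set d := (size p).-1.
have size_gt1 : (1 < size p)%N := root_size_gt1 (monic_neq0 mon_p) px0.
have size_p : size p = d.+1 by rewrite prednK // ltnW.
have d_gt0 : (0 < d)%N by rewrite -ltnS -size_p.
have span_xd : in_span S (powers x d) (x ^+ d).
  move: px0; rewrite rootE horner_coef size_p big_ord_recr /= -/d.
  have -> : p`_d = 1 by exact: (monicP mon_p).
  rewrite mul1r addrC addr_eq0 => /eqP ->.
  exists (fun i => - p`_i); split=> [i|]; first exact: subringN.
  by rewrite size_mkseq -sumrN; apply: eq_bigr => i _; rewrite nth_mkseq // mulNr.
elim: k => [|k [r [Sr xkE]]]; first exact: in_span_powers.
rewrite exprS xkE mulr_sumr; apply: in_span_sum => i _; rewrite mulrCA.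
apply: in_spanZ => //; rewrite size_mkseq in i *; rewrite nth_mkseq // -exprS.
case: (ltngtP i.+1 d) => [/in_span_powers // | | -> //].
by rewrite ltnS leqNgt ltn_ord.
Qed.

Definition adjoin_span (b : seq R) (x : R) (d : nat) :=
  [seq c * x ^+ l | c <- b, l <- iota 0 d].

Lemma in_span_adjoin b x (p : {poly R}) c k :
  p \is monic -> (forall i, S p`_i) -> root p x ->
  in_span S b c -> in_span S (adjoin_span b x (size p).-1) (c * x ^+ k).
Proof.
move=> mon_p Sp px0 [r [Sr ->]]; have [q [Sq ->]] := expr_in_span_powers k mon_p Sp px0.
rewrite mulr_suml; apply: in_span_sum => i _; rewrite mulr_sumr; apply: in_span_sum => j _.
rewrite mulrACA; apply: in_spanZ; first exact: subringM.
rewrite size_mkseq in j *; rewrite nth_mkseq //; apply: in_span_mem.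
by apply: (allpairs_f (fun c l => c * x ^+ l)); rewrite ?mem_nth ?mem_iota ?ltn_ord.
Qed.

Lemma span_ring_adjoin b x (p : {poly R}) :
  p \is monic -> (forall i, S p`_i) -> root p x ->
  span_ring S b -> span_ring S (adjoin_span b x (size p).-1).
Proof.
move=> mon_p Sp px0 [b1 bM]; split.
  by rewrite -[1]mulr1 -(expr0 x); apply: in_span_adjoin.
move=> u v /allpairsP[[c l] [/= bc _ ->]] /allpairsP[[c' l'] [/= bc' _ ->]].
by rewrite mulrACA -exprD; apply: in_span_adjoin => //; apply: bM.
Qed.

Lemma gen_alg_finite (s : seq R) : integral_over S (fun y => y \in s) ->
  exists b, forall y, gen_alg S s y -> in_span S b y.
Proof.
move=> int_s; suff [b [bR sb]] : exists b, span_ring S b /\ forall y, y \in s -> in_span S b y.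
  by exists b; apply: gen_alg_in_span.
elim: s int_s => [_|x s IH int_xs].
  exists [:: 1]; split=> //; split; first by apply: in_span_mem; rewrite inE.
  by move=> u v; rewrite !inE => /eqP -> /eqP ->; rewrite mulr1; apply: in_span_mem; rewrite inE.
have [b [bR sb]] := IH (fun y sy => int_xs y (mem_behead (s := x :: s) sy)).
have [p [mon_p [Sp px0]]] := int_xs x (mem_head _ _).
exists (adjoin_span b x (size p).-1); split; first exact: span_ring_adjoin.
move=> y; rewrite inE => /predU1P[->|sy].
  by have := in_span_adjoin 1 mon_p Sp px0 (proj1 bR); rewrite mul1r expr1.
by rewrite -[y]mulr1 -(expr0 x); apply: in_span_adjoin => //; apply: sb.
Qed.
End FiniteGeneration.

Section SeriesSubring.
Variables (R : comNzRingType) (n : nat) (S : subring_of R).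

Definition ps_over_pred : {pred powser R n} := fun f => boolp.asbool (ps_over S f).

Lemma ps_over_predP (f : powser R n) : reflect (ps_over S f) (f \in ps_over_pred).
Proof. exact: boolp.asboolP. Qed.

Lemma ps_over_subring_closed : subring_closed ps_over_pred.
Proof.
split.
- apply/ps_over_predP => m; change (S (@sone R n m)).
  by rewrite /sone; case: ifP => _; [apply: subring1 | apply: subring0].
- move=> f g /ps_over_predP Sf /ps_over_predP Sg; apply/ps_over_predP => m.
  by rewrite ps_subE; apply: subringB.
- move=> f g /ps_over_predP Sf /ps_over_predP Sg; apply/ps_over_predP => m.
  by rewrite ps_mulE smulE; apply: subring_sum => a _; apply: subringM.
Qed.

HB.instance Definition _ :=
  GRing.isSubringClosed.Build (powser R n) ps_over_pred ps_over_subring_closed.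

Record ps_sub := PsSub { ps_val : powser R n; _ : ps_val \in ps_over_pred }.
HB.instance Definition _ := [isSub for ps_val].
HB.instance Definition _ := [Choice of ps_sub by <:].
HB.instance Definition _ := [SubChoice_isSubComNzRing of ps_sub by <:].

Lemma integral_ps_over f : ps_over S f -> integralOver (val : ps_sub -> powser R n) f.
Proof.
by move=> /ps_over_predP Sf; rewrite -[f]/(val (PsSub Sf)); apply: integral_id.
Qed.

Lemma integral_sconst c (p : {poly R}) :
  p \is monic -> (forall i, S p`_i) -> root p c ->
  integralOver (val : ps_sub -> powser R n) (@sconst R n c).
Proof.
move=> mon_p Sp pc0.
pose lift a : ps_sub := insubd 0 (@sconst R n a).
have liftK a : S a -> val (lift a) = @sconst R n a.
  move=> Sa; rewrite insubdK //; apply/ps_over_predP => m /=.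
  by rewrite /sconst; case: ifP => _ //; apply: subring0.
have lift1 : lift 1 = 1 by apply: val_inj; rewrite liftK //; apply: subring1.
have lift0 : lift 0 = 0 by apply: val_inj; rewrite liftK ?rmorph0 //; apply: subring0.
exists (map_poly lift p).
  by rewrite monicE lead_coef_map_id0 // (monicP mon_p) lift1 ?oner_neq0.
suff -> : map_poly val (map_poly lift p) = map_poly (@sconst R n) p by apply: rmorph_root.
by apply/polyP => i; rewrite coef_map /= coef_map_id0 // liftK // coef_map.
Qed.

Lemma integral_coef_span (b : seq R) (f : powser R n) :
  integral_over S (fun y => y \in b) -> (forall m, in_span S b (f m)) ->
  integralOver (val : ps_sub -> powser R n) f.
Proof.
move=> int_b /boolp.choice[r fr]; pose g i : powser R n := fun m => r m i.
have -> : f = \sum_(i < size b) g i * @sconst R n b`_i.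
  apply: boolp.funext => m; rewrite ps_sumE; have [_ ->] := fr m.
  by apply: eq_bigr => i _; rewrite ps_mulE smulC smul_sconstl mulrC.
apply: big_ind => [|u v|i _]; [exact: integral0 | exact: integral_add |].
apply: integral_mul; first by apply: integral_ps_over => m; apply: (proj1 (fr m)).
by have [p [mon_p [Sp pb0]]] := int_b _ (mem_nth 0 (ltn_ord i)); apply: integral_sconst pb0.
Qed.
End SeriesSubring.

Lemma monic_root_expr (K : comNzRingType) (P : {poly K}) x :
  P \is monic -> root P x ->
  x ^+ (size P).-1 + \sum_(i < (size P).-1) P`_i * x ^+ i = 0.
Proof.
move=> mon_P /eqP; rewrite horner_coef.
have -> : size P = (size P).-1.+1 by rewrite prednK // size_poly_gt0 monic_neq0.
by rewrite big_ord_recr /= -/(lead_coef P) (monicP mon_P) mul1r addrC.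
Qed.

Theorem proposition6p4 (R : comNzRingType) (R0 : R -> Prop) (n : nat) :
  krull_dim0 R ->
  is_subring R0 -> artinian R0 ->
  integral_over R0 (fun _ => True) ->
  forall Ralpha : R -> Prop, in_family R0 Ralpha ->
    @ps_integral_over R n (@ps_over R n Ralpha) (@artinian_ps R R0 n).
Proof.
move=> _ R0_subring _ int_R Ralpha [t Ralpha_gen] f [A [[s A_gen] Af]].
pose S := SubringOf R0_subring.
have R0_Ralpha y : R0 y -> Ralpha y.
  by move=> R0y; apply/Ralpha_gen => T _ R0T _; apply: R0T.
have [b A_span] := gen_alg_finite (S := S) (s := s) (fun x _ => int_R x I).
have [p mon_p pf0] : integralOver (val : ps_sub n S -> powser R n) f.
  by apply: (integral_coef_span (b := b)) => [y _ | m]; [apply: int_R | apply/A_span/A_gen].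
pose P := map_poly (val : ps_sub n S -> powser R n) p.
exists (size P).-1, (fun i => P`_i); split=> [i _ m | m].
  by apply: R0_Ralpha; rewrite coef_map; move/ps_over_predP: (valP p`_i); apply.
rewrite sexpE; under eq_bigr do rewrite sexpE -ps_mulE.
have := congr1 (fun g : powser R n => g m) (monic_root_expr (monic_map _ mon_p) pf0).
by rewrite ps_addE ps_sumE.
Qed.
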